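(* The space $(\mathbb{R}^{n_1+n_2},d)$ is complete: every sequence $(x_n)$ in $\mathbb{R}^{n_1+n_2}$ with $\lim_{n,m\to\infty}d(x_n,x_m)=0$ has a limit $x\in\mathbb{R}^{n_1+n_2}$ with $\lim_{n\to\infty}d(x_n,x)=0$.
   Context: Fix integers $n_1,n_2\ge1$ and $\varkappa\in\mathbb{N}_+$, and write $x=(x',x'')\in\mathbb{R}^{n_1}\times\mathbb{R}^{n_2}$. Define $d(x,y)=|x'-y'|+\min\left\{\frac{|x''-y''|}{(|x'|+|y'|)^{\varkappa}},\,|x''-y''|^{1/(1+\varkappa)}\right\}$ (with the first entry of the minimum interpreted as $+\infty$ when $|x'|+|y'|=0$ and $x''\neq y''$), where $|\cdot|$ is the Euclidean norm. *)

From HB Require Import structures.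
From mathcomp Require Import all_boot all_order all_algebra.
From mathcomp Require Import all_classical all_reals all_analysis.
Set Implicit Arguments. Unset Strict Implicit. Unset Printing Implicit Defensive.
Import Order.TTheory GRing.Theory Num.Theory.
Local Open Scope ring_scope.

Definition enorm (R : realType) (n : nat) (v : 'rV[R]_n) : R :=
  Num.sqrt (\sum_(i < n) v ord0 i ^+ 2).

Definition dist_k (R : realType) (n1 n2 kappa : nat)
    (x y : 'rV[R]_n1 * 'rV[R]_n2) : R :=
  let a := enorm (x.1 - y.1) in
  let b := enorm (x.2 - y.2) in
  let s := enorm x.1 + enorm y.1 in
  let root := powR b (1 + kappa%:R)^-1 in
  a + (if s == 0 then root   (* first entry of min is +oo (or irrelevant when b = 0) *)
       else Num.min (b / s ^+ kappa) root).

From HB Require Import structures.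
From mathcomp Require Import all_boot all_order all_algebra.
From mathcomp Require Import all_classical all_reals all_analysis.
From mathcomp Require Import lra.
Import Order.TTheory GRing.Theory Num.Theory numFieldNormedType.Exports.
Local Open Scope classical_set_scope.
Local Open Scope ring_scope.

(* Since d(x, y) >= |x' - y'|, the first components of a d-Cauchy sequence are
   Cauchy in R^n1, hence converge and stay bounded, say by M.  When |x'| and
   |y'| are at most M, the bound d(x, y) < e <= 1 forces
   |x'' - y''| < e ((2M)^kappa + 1), whichever entry of the minimum is active,
   so the second components converge as well.  Finally
   d(x, y) <= |x' - y'| + |x'' - y''|^(1/(1+kappa)), so componentwise
   convergence implies convergence for d. *)

Lemma sumr_sqr_le_sqr_sumr (R : realDomainType) (I : Type) (r : seq I)
    (f : I -> R) :
  (forall i, 0 <= f i) -> \sum_(i <- r) f i ^+ 2 <= (\sum_(i <- r) f i) ^+ 2.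
Proof.
move=> f_ge0; elim: r => [|a r IHr]; first by rewrite !big_nil expr0n.
have sum_ge0 : 0 <= \sum_(i <- r) f i by apply: sumr_ge0.
have := f_ge0 a; rewrite !big_cons; nra.
Qed.

Definition cauchy_wrt {T : Type} {R : numDomainType} (d : T -> T -> R)
    (u : nat -> T) :=
  forall e : R, 0 < e -> exists N : nat, forall n m : nat,
    (N <= n)%N -> (N <= m)%N -> d (u n) (u m) < e.

Section EuclideanNorm.
Context {R : realType} {n : nat}.
Implicit Types v : 'rV[R]_n.

Lemma enorm_ge0 v : 0 <= enorm v.
Proof. exact: sqrtr_ge0. Qed.

Lemma coord_le_enorm v i : `|v ord0 i| <= enorm v.
Proof.
rewrite /enorm -sqrtr_sqr ler_sqrt; last by apply: sumr_ge0 => j _; apply: sqr_ge0.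
by rewrite (bigD1 i) //= lerDl; apply: sumr_ge0 => j _; apply: sqr_ge0.
Qed.

Lemma enorm_le_sum_coord v : enorm v <= \sum_i `|v ord0 i|.
Proof.
have sum_ge0 : 0 <= \sum_i `|v ord0 i| by apply: sumr_ge0.
rewrite /enorm -(ger0_norm sum_ge0) -sqrtr_sqr ler_sqrt ?sqr_ge0 //.
under eq_bigr do rewrite -real_normK ?num_real //.
exact: sumr_sqr_le_sqr_sumr.
Qed.

Lemma coord_le_mx_norm v i : `|v ord0 i| <= `|v|.
Proof.
rewrite [leRHS]/Num.norm /= mx_normrE; apply/bigmax_geP; right.
by exists (ord0, i).
Qed.

Lemma mx_norm_le_enorm v : `|v| <= enorm v.
Proof.
rewrite [leLHS]/Num.norm /= mx_normrE; apply/bigmax_leP; split=> [|[i j] _ /=].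
  exact: enorm_ge0.
by rewrite (ord1 i); apply: coord_le_enorm.
Qed.

Lemma enorm_le_mx_norm v : enorm v <= n%:R * `|v|.
Proof.
apply: (le_trans (enorm_le_sum_coord v)).
rewrite mulr_natl -[n in _ *+ n]card_ord -sumr_const.
by apply: ler_sum => i _; apply: coord_le_mx_norm.
Qed.

Lemma cvg_enorm_lt {w : nat -> 'rV[R]_n} {c : 'rV[R]_n} : w @ \oo --> c ->
  forall e : R, 0 < e -> \forall k \near \oo, enorm (w k - c) < e.
Proof.
move=> /cvgr_dist_lt wc e e_gt0.
have n1_gt0 : 0 < n%:R + 1 :> R by rewrite ltr_wpDl.
have /wc : 0 < e / (n%:R + 1) by rewrite divr_gt0.
apply: filterS => k; rewrite distrC ltr_pdivlMr // => wkc.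
apply: le_lt_trans (enorm_le_mx_norm _) (le_lt_trans _ wkc).
by rewrite mulrC ler_wpM2l // lerDl.
Qed.

Lemma cvg_enorm_bounded {w : nat -> 'rV[R]_n} {c : 'rV[R]_n} : w @ \oo --> c ->
  exists M : R, \forall k \near \oo, enorm (w k) <= M.
Proof.
move=> /cvg_bounded /ex_bound [M wM]; exists (n%:R * M).
apply: filterS wM => k /= wkM.
by apply: le_trans (enorm_le_mx_norm _) _; rewrite ler_wpM2l.
Qed.

Lemma enorm_cauchy_cvg {w : nat -> 'rV[R]_n} :
  cauchy_wrt (fun x y => enorm (x - y)) w -> cvgn w.
Proof.
move=> wC; apply: cauchy_cvg; apply: cauchy_exP => e e_gt0.
have [N wN] := wC e e_gt0; exists (w N), N => // k Nk.
rewrite -ball_normE /ball_ /=.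
exact: le_lt_trans (mx_norm_le_enorm _) (wN _ _ _ Nk).
Qed.

End EuclideanNorm.

Section QuasiDistance.
Context {R : realType} {n1 n2 : nat} (kappa : nat).
Local Notation p := ((1 + kappa%:R)^-1 : R).
Implicit Types x y : 'rV[R]_n1 * 'rV[R]_n2.

Let p_gt0 : 0 < p.
Proof. by rewrite invr_gt0 ltr_wpDr. Qed.

Let p_le1 : p <= 1.
Proof. by rewrite invf_le1 ?lerDl ?ltr_wpDr. Qed.

Lemma lt_of_powR_lt (b e : R) : 0 <= b -> 0 < e <= 1 -> powR b p < e -> b < e.
Proof.
move=> b_ge0 /andP[e_gt0 e_le1]; rewrite !ltNge; apply: contra => eb.
apply: le_trans (ger1_powR _ p_le1) _; first by rewrite e_gt0 e_le1.
by apply: ge0_ler_powR; rewrite ?nnegrE // ltW.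
Qed.

Lemma powR_le_of_le (b e : R) : 0 <= b -> 0 < e -> b <= e ^+ kappa.+1 ->
  powR b p <= e.
Proof.
move=> b_ge0 e_gt0 be; have e_ge0 := ltW e_gt0.
apply: (@le_trans _ _ (powR (e ^+ kappa.+1) p)).
  by apply: ge0_ler_powR; rewrite ?nnegrE ?exprn_ge0 // ltW.
have kappa1_neq0 : 1 + kappa%:R != 0 :> R by rewrite gt_eqF // ltr_wpDr.
by rewrite -powR_mulrn // -powRrM -nat1r mulfV // powRr1.
Qed.

Lemma dist_k_fst_le x y : enorm (x.1 - y.1) <= dist_k kappa x y.
Proof.
rewrite /dist_k /= lerDl; case: ifP => _; first exact: powR_ge0.
rewrite le_min powR_ge0 andbT divr_ge0 ?enorm_ge0 //.
by rewrite exprn_ge0 // addr_ge0 ?enorm_ge0.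
Qed.

Lemma dist_k_le x y :
  dist_k kappa x y <= enorm (x.1 - y.1) + powR (enorm (x.2 - y.2)) p.
Proof. by rewrite /dist_k /= lerD2l; case: ifP => // _; rewrite ge_min lexx orbT. Qed.

Lemma dist_k_snd_lt {x y} {e C : R} : 0 < e <= 1 -> enorm x.1 + enorm y.1 <= C ->
  dist_k kappa x y < e -> enorm (x.2 - y.2) < e * (C ^+ kappa + 1).
Proof.
move=> /andP[e_gt0 e_le1] sC; set s := enorm x.1 + enorm y.1.
have s_ge0 : 0 <= s by rewrite addr_ge0 ?enorm_ge0.
have b_ge0 := enorm_ge0 (x.2 - y.2).
have Ce_ge : e <= e * (C ^+ kappa + 1).
  by rewrite ler_pMr // lerDr exprn_ge0 // (le_trans s_ge0).
have root_lt : powR (enorm (x.2 - y.2)) p < e ->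
    enorm (x.2 - y.2) < e * (C ^+ kappa + 1).
  move=> /lt_of_powR_lt; rewrite e_gt0 e_le1 => /(_ b_ge0 isT).
  by move/lt_le_trans; apply.
move=> /(le_lt_trans (ler_wpDl (enorm_ge0 _) (lexx _))); rewrite -/s.
case: ifP => s0; first exact: root_lt.
rewrite gt_min => /orP[|]; last exact: root_lt.
have s_gt0 : 0 < s by rewrite lt_def s0.
rewrite ltr_pdivrMr ?exprn_gt0 // => /lt_le_trans; apply; rewrite ler_pM2l //.
by rewrite ler_wpDr // lerXn2r // nnegrE (le_trans s_ge0).
Qed.

Lemma cauchy_wrt_snd {u : nat -> 'rV[R]_n1 * 'rV[R]_n2} {M : R} :
  cauchy_wrt (dist_k kappa) u -> (\forall k \near \oo, enorm (u k).1 <= M) ->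
  cauchy_wrt (fun a b => enorm (a - b)) (fun k => (u k).2).
Proof.
move=> uC [N0 _ uM] e e_gt0.
have M_ge0 : 0 <= M by apply: le_trans (enorm_ge0 _) (uM N0 (leqnn N0)).
pose K := (M + M) ^+ kappa + 1.
have K_gt0 : 0 < K by rewrite ltr_wpDl ?exprn_ge0 ?addr_ge0.
have e'_bounds : 0 < Num.min 1 (e / K) <= 1.
  by rewrite lt_min ltr01 divr_gt0 // ge_min lexx.
have [N uN] := uC _ (andP e'_bounds).1.
exists (maxn N N0) => n m; rewrite !geq_max => /andP[Nn N0n] /andP[Nm N0m].
have uM2 : enorm (u n).1 + enorm (u m).1 <= M + M by rewrite lerD ?uM.
have /lt_le_trans := dist_k_snd_lt e'_bounds uM2 (uN n m Nn Nm).
by apply; rewrite -/K -ler_pdivlMr // ge_min lexx orbT.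
Qed.

Lemma dist_k_cvg0 (u : nat -> 'rV[R]_n1 * 'rV[R]_n2) (c : 'rV[R]_n1 * 'rV[R]_n2) :
  (fun k => (u k).1) @ \oo --> c.1 -> (fun k => (u k).2) @ \oo --> c.2 ->
  (fun k => dist_k kappa (u k) c) @ \oo --> (0 : R^o).
Proof.
move=> u1c u2c; apply/cvgrPdist_lt => e e_gt0.
have e2_gt0 : 0 < e / 2 by rewrite divr_gt0.
have u1_near := cvg_enorm_lt u1c _ e2_gt0.
have u2_near := cvg_enorm_lt u2c _ (exprn_gt0 kappa.+1 e2_gt0).
near=> k.
rewrite sub0r normrN ger0_norm; last exact: le_trans (enorm_ge0 _) (dist_k_fst_le _ _).
apply: le_lt_trans (dist_k_le (u k) c) _; rewrite [e]splitr ltr_leD //.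
  by near: k.
by apply: powR_le_of_le; rewrite ?enorm_ge0 // ltW //; near: k.
Unshelve. all: by end_near.
Qed.

End QuasiDistance.

Theorem lemma2p1 (R : realType) (n1 n2 kappa : nat)
  (hn1 : (1 <= n1)%N) (hn2 : (1 <= n2)%N) (hk : (1 <= kappa)%N)
  (u : nat -> 'rV[R]_n1 * 'rV[R]_n2) :
  (forall e : R, 0 < e -> exists N : nat, forall n m : nat,
      (N <= n)%N -> (N <= m)%N -> dist_k kappa (u n) (u m) < e) ->
  exists x : 'rV[R]_n1 * 'rV[R]_n2,
    (fun n => dist_k kappa (u n) x) @ \oo --> (0 : R^o).
Proof.
move=> uC.
have u1C : cauchy_wrt (fun a b => enorm (a - b)) (fun k => (u k).1).
  move=> e /uC[N uN]; exists N => n m Nn Nm.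
  exact: le_lt_trans (dist_k_fst_le kappa (u n) (u m)) (uN n m Nn Nm).
have /cvg_ex[c1 u1c1] := enorm_cauchy_cvg u1C.
have [M u1M] := cvg_enorm_bounded u1c1.
have /cvg_ex[c2 u2c2] := enorm_cauchy_cvg (cauchy_wrt_snd kappa uC u1M).
by exists (c1, c2); apply: dist_k_cvg0.
Qed.
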